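(* Let $G$ be a nonempty countable graph not containing $K_\omega$ as a subgraph. Then the graph $K_\omega^{<{\rm rk}(G)+1>}$ admits no homomorphism into $G$.
   Context: All graphs are simple and loopless; homomorphisms are edge-preserving vertex maps. $K_n$ is the complete graph on $\{0,\dots,n-1\}$, $K_\omega$ the countably infinite complete graph. For a graph $G$ not containing $K_\omega$, $T^G$ is the set of all homomorphisms $K_n\to G$, $n\ge 1$, ordered by extension; ${\rm rk}(f)=\sup\{{\rm rk}(g)+1: g \text{ immediate successor of } f\}$ and ${\rm rk}(G)=\sup\{{\rm rk}(f)+1: f \text{ minimal in } T^G\}$. For an ordinal $\alpha$, $K_\omega^{<\alpha>}$ is the graph whose vertices are all finite strictly decreasing sequences of ordinals $<\alpha$ (including the empty sequence), two distinct sequences being adjacent iff one is an initial segment of the other. *)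

From Stdlib Require Import List Sorted Relations.
Import ListNotations.

Definition simple_graph (V : Type) (adj : V -> V -> Prop) : Prop :=
  (forall x y, adj x y -> adj y x) /\ (forall x, ~ adj x x).

Definition countable_type (V : Type) : Prop :=
  exists c : V -> nat, forall x y, c x = c y -> x = y.

(* G contains K_omega as a subgraph: a homomorphism K_omega -> G
   (automatically injective since G is loopless). *)
Definition contains_Komega (V : Type) (adj : V -> V -> Prop) : Prop :=
  exists h : nat -> V, forall i j, i <> j -> adj (h i) (h j).

(* Homomorphisms K_n -> G, n >= 1, encoded as the nonempty list
   [f 0; ...; f (n-1)]. Extension = list prefix; immediate successors of l
   are the lists l ++ [v]. Minimal elements are the lists [v]. *)
Definition TG (V : Type) (adj : V -> V -> Prop) (l : list V) : Prop :=
  l <> [] /\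
  forall i j x y, i <> j -> nth_error l i = Some x -> nth_error l j = Some y ->
    adj x y.

Definition well_order (W : Type) (lt : W -> W -> Prop) : Prop :=
  well_founded lt /\
  (forall a b c, lt a b -> lt b c -> lt a c) /\
  (forall a, ~ lt a a) /\
  (forall a b, lt a b \/ a = b \/ lt b a).

Definition wle {W : Type} (lt : W -> W -> Prop) (a b : W) : Prop :=
  lt a b \/ a = b.

(* w is the supremum of {x+1 : P x}, i.e. the least strict upper bound
   of {x : P x}. *)
Definition is_lsub {W : Type} (lt : W -> W -> Prop) (P : W -> Prop) (w : W)
  : Prop :=
  (forall x, P x -> lt x w) /\
  (forall u, (forall x, P x -> lt x u) -> wle lt w u).

Definition is_rank_fun (V : Type) (adj : V -> V -> Prop)
  (W : Type) (lt : W -> W -> Prop) (r : list V -> W) : Prop :=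
  forall l, TG V adj l ->
    is_lsub lt (fun x => exists v, TG V adj (l ++ [v]) /\ x = r (l ++ [v])) (r l).

Definition is_graph_rank (V : Type) (adj : V -> V -> Prop)
  (W : Type) (lt : W -> W -> Prop) (r : list V -> W) (rho : W) : Prop :=
  is_lsub lt (fun x => exists v, TG V adj [v] /\ x = r [v]) rho.

(* Vertices of K_omega^{<rho+1>}: finite strictly decreasing sequences of
   elements of W that are <= rho (i.e. < rho+1), including the empty one. *)
Definition Kvert {W : Type} (lt : W -> W -> Prop) (rho : W) (s : list W) : Prop :=
  Sorted (fun a b => lt b a) s /\ Forall (fun a => wle lt a rho) s.

Definition Kadj {W : Type} (s t : list W) : Prop :=
  s <> t /\ ((exists u, t = s ++ u) \/ (exists u, s = t ++ u)).

Definition Khom_into {W : Type} (lt : W -> W -> Prop) (rho : W)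
  (V : Type) (adj : V -> V -> Prop) (phi : list W -> V) : Prop :=
  forall s t, Kvert lt rho s -> Kvert lt rho t -> Kadj s t -> adj (phi s) (phi t).

From Stdlib Require Import List Sorted Arith Lia.
Import ListNotations.

(* Follow a homomorphism phi : K_omega^<rho+1> -> G down a branch.  If every
   entry of the decreasing sequence s is >= a, the images of the prefixes of s
   form a clique f of G with rk(f) >= a: for each b < a, appending b to s
   appends a new vertex adjacent to all of f, and induction on a gives that
   extension rank >= b.  For s = [] and a = rho this says rk([phi []]) >= rho,
   whereas rk(G) = rho is a strict upper bound of the ranks of minimal
   elements. *)

Lemma sorted_snoc {W : Type} (lt : W -> W -> Prop) (s : list W) (b : W) :
  Sorted (fun a c => lt c a) s -> Forall (fun a => lt b a) s ->
  Sorted (fun a c => lt c a) (s ++ [b]).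
Proof.
  induction s as [|a s IH]; intros Hs Hf; simpl.
  - repeat constructor.
  - inversion Hs; subst. inversion Hf; subst. constructor.
    + apply IH; auto.
    + destruct s as [|a' s']; simpl; constructor; auto.
      now inversion H2.
Qed.

Lemma Kvert_snoc {W : Type} (lt : W -> W -> Prop) (rho b : W) (s : list W) :
  Kvert lt rho s -> Forall (fun a => lt b a) s -> wle lt b rho ->
  Kvert lt rho (s ++ [b]).
Proof.
  intros [Hs Hf] Hb Hbrho. split.
  - now apply sorted_snoc.
  - apply Forall_app; auto.
Qed.

Lemma Kadj_prefix_snoc {W : Type} (t u : list W) (b : W) :
  Kadj t ((t ++ u) ++ [b]) /\ Kadj ((t ++ u) ++ [b]) t.
Proof.
  assert (Hne : t <> (t ++ u) ++ [b]).
  { intro E. apply (f_equal (@length W)) in E.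
    rewrite !length_app in E. simpl in E. lia. }
  rewrite <- app_assoc in *.
  split; split; auto; [left | right]; eexists; reflexivity.
Qed.

Lemma nth_error_snoc {V : Type} (l : list V) (y x : V) (i : nat) :
  nth_error (l ++ [y]) i = Some x ->
  nth_error l i = Some x \/ (i = length l /\ x = y).
Proof.
  intros H. destruct (Nat.lt_ge_cases i (length l)) as [Hi|Hi].
  - left. now rewrite nth_error_app1 in H.
  - right. rewrite nth_error_app2 in H by exact Hi.
    destruct (i - length l) as [|[|]] eqn:E; simpl in H; try congruence.
    split; [lia | congruence].
Qed.

Lemma TG_snoc (V : Type) (adj : V -> V -> Prop) (l : list V) (y : V) :
  TG V adj l -> (forall x, In x l -> adj x y /\ adj y x) ->
  TG V adj (l ++ [y]).
Proof.
  intros [Hl HT] Hy. split.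
  - now destruct l.
  - intros i j x z Hij Hx Hz.
    destruct (nth_error_snoc _ _ _ _ Hx) as [Hx'|[-> ->]];
    destruct (nth_error_snoc _ _ _ _ Hz) as [Hz'|[-> ->]].
    + eauto.
    + apply Hy. eapply nth_error_In; eauto.
    + apply Hy. eapply nth_error_In; eauto.
    + congruence.
Qed.

Section WellOrder.

Variables (W : Type) (lt : W -> W -> Prop).
Hypothesis Hwo : well_order W lt.

Lemma lt_irrefl (a : W) : ~ lt a a.
Proof. apply Hwo. Qed.

Lemma lt_wle_trans (a b c : W) : lt a b -> wle lt b c -> lt a c.
Proof.
  destruct Hwo as [_ [Htr _]]. intros Hab [Hbc | <-]; eauto.
Qed.

Lemma wle_lt_trans (a b c : W) : wle lt a b -> lt b c -> lt a c.
Proof.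
  destruct Hwo as [_ [Htr _]]. intros [Hab | ->] Hbc; eauto.
Qed.

Lemma wle_of_lt_bound (a c : W) : (forall b, lt b a -> lt b c) -> wle lt a c.
Proof.
  destruct Hwo as [_ [_ [Hirr Htri]]]. intros H.
  destruct (Htri a c) as [Hac | [Hac | Hca]].
  - now left.
  - now right.
  - now destruct (Hirr c (H c Hca)).
Qed.

End WellOrder.

Section Branch.

Variables (V : Type) (adj : V -> V -> Prop) (W : Type) (lt : W -> W -> Prop).
Hypothesis Hwo : well_order W lt.
Variables (r : list V -> W) (rho : W) (phi : list W -> V).
Hypothesis Hr : is_rank_fun V adj W lt r.
Hypothesis Hphi : Khom_into lt rho V adj phi.

Definition clique_along (l : list V) (s : list W) : Prop :=
  TG V adj l /\ Kvert lt rho s /\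
  forall x, In x l -> exists t u, x = phi t /\ s = t ++ u /\ Kvert lt rho t.

Lemma clique_along_snoc (l : list V) (s : list W) (b : W) :
  clique_along l s -> Kvert lt rho (s ++ [b]) ->
  clique_along (l ++ [phi (s ++ [b])]) (s ++ [b]).
Proof.
  intros [Hl [_ Hpre]] Hsb. split; [|split; [exact Hsb|]].
  - apply TG_snoc; [exact Hl|].
    intros x Hx. destruct (Hpre x Hx) as [t [u [-> [-> Ht]]]].
    destruct (Kadj_prefix_snoc t u b) as [Hts Hst].
    split; apply Hphi; auto.
  - intros x Hx. apply in_app_or in Hx as [Hx | [<- | []]].
    + destruct (Hpre x Hx) as [t [u [-> [-> Ht]]]].
      exists t, (u ++ [b]). rewrite app_assoc. auto.
    + exists (s ++ [b]), []. rewrite app_nil_r. auto.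
Qed.

Lemma rank_ge_along (a : W) : forall l s, clique_along l s ->
  Forall (wle lt a) s -> wle lt a rho -> wle lt a (r l).
Proof.
  pose proof (proj1 Hwo) as Hwf.
  induction a as [a IH] using (well_founded_ind Hwf).
  intros l s Hls Has Harho. apply (wle_of_lt_bound W lt Hwo). intros b Hba.
  assert (Hsb : Kvert lt rho (s ++ [b])).
  { apply Kvert_snoc; [apply Hls| |].
    - eapply Forall_impl; [|exact Has]. intros c. now apply (lt_wle_trans W lt Hwo).
    - left. now apply (lt_wle_trans W lt Hwo) with a. }
  pose proof (clique_along_snoc l s b Hls Hsb) as Hext.
  assert (Hb : wle lt b (r (l ++ [phi (s ++ [b])]))).
  { apply (IH b Hba _ _ Hext).
    - apply Forall_app. split.
      + eapply Forall_impl; [|exact Has]. intros c Hac.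
        left. now apply (lt_wle_trans W lt Hwo) with a.
      + constructor; [now right | constructor].
    - left. now apply (lt_wle_trans W lt Hwo) with a. }
  assert (Hstep : lt (r (l ++ [phi (s ++ [b])])) (r l)).
  { apply (proj1 (Hr l (proj1 Hls))). eexists. split; [apply Hext | reflexivity]. }
  exact (wle_lt_trans W lt Hwo _ _ _ Hb Hstep).
Qed.

Lemma clique_along_root : clique_along [phi []] [].
Proof.
  split; [|split].
  - split; [discriminate|].
    intros [|[|]] [|[|]] x y Hij; simpl; congruence.
  - split; constructor.
  - intros x [<- | []]. exists [], []. repeat split; constructor.
Qed.

End Branch.

Theorem mainTheorem6 (V : Type) (adj : V -> V -> Prop)
  (Hg : simple_graph V adj) (Hne : inhabited V) (Hc : countable_type V)
  (HK : ~ contains_Komega V adj)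
  (W : Type) (lt : W -> W -> Prop) (Hwo : well_order W lt)
  (r : list V -> W) (Hr : is_rank_fun V adj W lt r)
  (rho : W) (Hrho : is_graph_rank V adj W lt r rho) :
  ~ exists phi : list W -> V, Khom_into lt rho V adj phi.
Proof.
  (* The hypotheses on G only serve to make the rank function r exist. *)
  intros [phi Hphi].
  pose proof (clique_along_root V adj W lt rho phi) as Hroot.
  assert (Hlt : lt (r [phi []]) rho).
  { apply (proj1 Hrho). exists (phi []). split; [apply Hroot | reflexivity]. }
  assert (Hge : wle lt rho (r [phi []])).
  { apply (rank_ge_along V adj W lt Hwo r rho phi Hr Hphi rho _ [] Hroot).
    - constructor.
    - now right. }
  apply (lt_irrefl W lt Hwo (r [phi []])).
  exact (lt_wle_trans W lt Hwo _ _ _ Hlt Hge).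
Qed.
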